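(* Let $T$ be a non-degenerate T-graph and $\phi_{\mathrm{ref}}$ the reference flow defined below. Then for every white vertex $w$ of $\mathcal H$, $\sum_{b\sim w}\phi_{\mathrm{ref}}(wb)=1$, and for every black vertex $b$ of $\mathcal H$, $\sum_{w\sim b}\phi_{\mathrm{ref}}(bw)=-1$.
   Context: Setup. $\mathcal H$ is the hexagonal lattice with black/white bipartition, $\mathcal H^\dagger$ its dual triangular lattice. A non-degenerate T-graph $T=\psi(\mathcal H^\dagger)\subset\mathbb C$ (built from a triangle $\Delta$ and a unit complex number $\lambda$) is a planar graph in which each black vertex $b$ of $\mathcal H$ corresponds to a segment $\psi(b)$, each white vertex $w$ to a non-degenerate triangular face $\psi(w)$ (similar to $\Delta$), every vertex of $T$ lies in exactly three segments, being an endpoint of two and in the interior of exactly one, and for adjacent $w,b$ the intersection $\psi(w)\cap\psi(b)$ is a nontrivial sub-segment of $\psi(b)$ on the boundary of $\psi(w)$. Reference flow: for adjacent white $w$ and black $b$, let $v_1,v_2$ be the two vertices of $T$ at the ends of $\psi(w)\cap\psi(b)$, and $S_1,S_2$ the segments containing $v_1,v_2$ in their interior (one of them may be $\psi(b)$). Let $\theta_i$ be the unsigned angle between $\psi(b)$ and $S_i$ measured on the side opposite to $\psi(w)$ ($\theta_i=0$ if $S_i=\psi(b)$). Set $\phi_{\mathrm{ref}}(wb)=\frac{\theta_1+\theta_2}{2\pi}$ and $\phi_{\mathrm{ref}}(bw)=-\phi_{\mathrm{ref}}(wb)$. *)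

From Stdlib Require Import Reals Lra ZArith Lia ClassicalEpsilon.
Open Scope R_scope.

Definition pt : Type := (R * R)%type.
Definition padd (p q : pt) : pt := (fst p + fst q, snd p + snd q).
Definition psub (p q : pt) : pt := (fst p - fst q, snd p - snd q).
Definition pscale (t : R) (p : pt) : pt := (t * fst p, t * snd p).
Definition dot (u v : pt) : R := fst u * fst v + snd u * snd v.
Definition cross (u v : pt) : R := fst u * snd v - snd u * fst v.
Definition pnorm (u : pt) : R := sqrt (dot u u).
Definition dist (p q : pt) : R := pnorm (psub p q).

Definition uangle (u v : pt) : R := acos (dot u v / (pnorm u * pnorm v)).

Definition cseg (x y z : pt) : Prop :=
  exists t, 0 <= t <= 1 /\ z = padd (pscale t x) (pscale (1 - t) y).
Definition sbetween (x y z : pt) : Prop :=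
  x <> y /\ exists t, 0 < t < 1 /\ z = padd (pscale t x) (pscale (1 - t) y).
Definition conv3 (p q r z : pt) : Prop :=
  exists a b c, 0 <= a /\ 0 <= b /\ 0 <= c /\ a + b + c = 1 /\
    z = padd (pscale a p) (padd (pscale b q) (pscale c r)).
Definition oconv3 (p q r z : pt) : Prop :=
  exists a b c, 0 < a /\ 0 < b /\ 0 < c /\ a + b + c = 1 /\
    z = padd (pscale a p) (padd (pscale b q) (pscale c r)).
Definition collinear3 (p q r : pt) : Prop := cross (psub q p) (psub r p) = 0.
Definition nondeg_tri (p q r : pt) : Prop := cross (psub q p) (psub r p) <> 0.

Definition in_interior (X : pt -> Prop) (z : pt) : Prop :=
  exists x y, X x /\ X y /\ sbetween x y z.
Definition is_endpoint (X : pt -> Prop) (z : pt) : Prop :=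
  X z /\ ~ in_interior X z.

Definition similar_tri (p q r p' q' r' : pt) : Prop :=
  exists k, 0 < k /\
   ((dist p q = k * dist p' q' /\ dist q r = k * dist q' r' /\ dist r p = k * dist r' p') \/
    (dist p q = k * dist q' r' /\ dist q r = k * dist r' p' /\ dist r p = k * dist p' q') \/
    (dist p q = k * dist r' p' /\ dist q r = k * dist p' q' /\ dist r p = k * dist q' r') \/
    (dist p q = k * dist q' p' /\ dist q r = k * dist p' r' /\ dist r p = k * dist r' q') \/
    (dist p q = k * dist p' r' /\ dist q r = k * dist r' q' /\ dist r p = k * dist q' p') \/
    (dist p q = k * dist r' q' /\ dist q r = k * dist q' p' /\ dist r p = k * dist p' r')).

(** * The hexagonal lattice H and its dual triangular lattice H^dagger.
    Vertices of H^dagger (= faces of H) are indexed by Z*Z; its triangles are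
    up-triangles {(i,j),(i+1,j),(i,j+1)} = white vertex (i,j) of H, and
    down-triangles {(i+1,j),(i,j+1),(i+1,j+1)} = black vertex (i,j) of H.
    White (i,j) is adjacent to the blacks (i,j), (i,j-1), (i-1,j). *)
Definition face : Type := (Z * Z)%type.
Definition white : Type := (Z * Z)%type.
Definition black : Type := (Z * Z)%type.

Definition wface (w : white) (k : nat) : face :=
  let (i, j) := w in
  match k with 0%nat => (i, j) | 1%nat => ((i + 1)%Z, j) | _ => (i, (j + 1)%Z) end.
Definition bface (b : black) (k : nat) : face :=
  let (i, j) := b in
  match k with 0%nat => ((i + 1)%Z, j) | 1%nat => (i, (j + 1)%Z)
             | _ => ((i + 1)%Z, (j + 1)%Z) end.

Definition wnb (w : white) (k : nat) : black :=
  let (i, j) := w in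
  match k with 0%nat => (i, j) | 1%nat => (i, (j - 1)%Z) | _ => ((i - 1)%Z, j) end.
(** the two faces shared by w and wnb w k (endpoints of the dual edge) *)
Definition efst (w : white) (k : nat) : face :=
  let (i, j) := w in
  match k with 0%nat => ((i + 1)%Z, j) | _ => (i, j) end.
Definition esnd (w : white) (k : nat) : face :=
  let (i, j) := w in
  match k with 0%nat => (i, (j + 1)%Z) | 1%nat => ((i + 1)%Z, j) | _ => (i, (j + 1)%Z) end.
(** the third vertex of the triangle of w, not on the edge shared with wnb w k *)
Definition ethird (w : white) (k : nat) : face :=
  let (i, j) := w in
  match k with 0%nat => (i, j) | 1%nat => (i, (j + 1)%Z) | _ => ((i + 1)%Z, j) end.

(** the three edges at black b, as pairs (white, index): wnb w k = b *)
Definition bnbW (b : black) (k : nat) : white :=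
  let (i, j) := b in
  match k with 0%nat => (i, j) | 1%nat => (i, (j + 1)%Z) | _ => ((i + 1)%Z, j) end.
Definition bnbK (k : nat) : nat := k.

(** the three black vertices (segments) around a face f *)
Definition fnb (f : face) (k : nat) : black :=
  let (a, c) := f in
  match k with 0%nat => ((a - 1)%Z, c) | 1%nat => (a, (c - 1)%Z)
             | _ => ((a - 1)%Z, (c - 1)%Z) end.

(** * T-graphs: psi maps faces of H (vertices of H^dagger) to the plane *)
Section TG.
Variable psi : face -> pt.

Definition tri (w : white) : pt -> Prop :=
  conv3 (psi (wface w 0)) (psi (wface w 1)) (psi (wface w 2)).
Definition tri_int (w : white) : pt -> Prop :=
  oconv3 (psi (wface w 0)) (psi (wface w 1)) (psi (wface w 2)).
Definition tri_bd (w : white) (z : pt) : Prop :=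
  cseg (psi (wface w 0)) (psi (wface w 1)) z \/
  cseg (psi (wface w 1)) (psi (wface w 2)) z \/
  cseg (psi (wface w 2)) (psi (wface w 0)) z.
Definition sg (b : black) : pt -> Prop :=
  conv3 (psi (bface b 0)) (psi (bface b 1)) (psi (bface b 2)).

Definition is_TGraph : Prop :=
  (exists d0 d1 d2 : pt, nondeg_tri d0 d1 d2 /\
     forall w, nondeg_tri (psi (wface w 0)) (psi (wface w 1)) (psi (wface w 2)) /\
       similar_tri (psi (wface w 0)) (psi (wface w 1)) (psi (wface w 2)) d0 d1 d2) /\
  (forall b, collinear3 (psi (bface b 0)) (psi (bface b 1)) (psi (bface b 2)) /\
     ~ (psi (bface b 0) = psi (bface b 1) /\ psi (bface b 1) = psi (bface b 2))) /\
  (forall f, (forall b, sg b (psi f) -> b = fnb f 0 \/ b = fnb f 1 \/ b = fnb f 2) /\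
     ((in_interior (sg (fnb f 0)) (psi f) /\ is_endpoint (sg (fnb f 1)) (psi f) /\
       is_endpoint (sg (fnb f 2)) (psi f)) \/
      (is_endpoint (sg (fnb f 0)) (psi f) /\ in_interior (sg (fnb f 1)) (psi f) /\
       is_endpoint (sg (fnb f 2)) (psi f)) \/
      (is_endpoint (sg (fnb f 0)) (psi f) /\ is_endpoint (sg (fnb f 1)) (psi f) /\
       in_interior (sg (fnb f 2)) (psi f)))) /\
  (forall w k, (k < 3)%nat -> exists x y, x <> y /\
     (forall z, (tri w z /\ sg (wnb w k) z) <-> cseg x y z) /\
     (forall z, cseg x y z -> tri_bd w z)) /\
  (* planarity of the straight-line embedding: faces have disjoint interiors,
     segments do not enter faces, distinct segments meet in at most one point *)
  (forall w w' z, w <> w' -> tri_int w z -> tri_int w' z -> False) /\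
  (forall b w z, sg b z -> tri_int w z -> False) /\
  (forall b b' z z', b <> b' -> sg b z -> sg b' z -> sg b z' -> sg b' z' -> z = z').

Definition int_seg (f : face) : black :=
  if excluded_middle_informative (in_interior (sg (fnb f 0)) (psi f)) then fnb f 0
  else if excluded_middle_informative (in_interior (sg (fnb f 1)) (psi f)) then fnb f 1
  else fnb f 2.

(** angle theta at the endpoint v = psi f of psi(w) /\ psi(b), where o is the
    other endpoint and p the third vertex of psi(w): the angle between psi(b)
    (direction o - v) and the ray of S = int_seg f on the side of line(v,o)
    opposite to psi(w); 0 if S = b. *)
Definition opp_side (v o p x : pt) : Prop :=
  cross (psub o v) (psub x v) * cross (psub o v) (psub p v) < 0.

Definition theta (b : black) (f fo g : face) : R :=
  let v := psi f in let o := psi fo in let p := psi g in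
  let S := int_seg f in
  if excluded_middle_informative (S = b) then 0
  else
    let x := if excluded_middle_informative (opp_side v o p (psi (bface S 0)))
             then psi (bface S 0)
             else if excluded_middle_informative (opp_side v o p (psi (bface S 1)))
             then psi (bface S 1) else psi (bface S 2) in
    uangle (psub o v) (psub x v).

Definition phi_ref (w : white) (k : nat) : R :=
  (theta (wnb w k) (efst w k) (esnd w k) (ethird w k) +
   theta (wnb w k) (esnd w k) (efst w k) (ethird w k)) / (2 * PI).
Definition phi_ref_bw (b : black) (k : nat) : R := - phi_ref (bnbW b k) (bnbK k).
End TG.

Lemma bnb_ok : forall b k, (k < 3)%nat -> wnb (bnbW b k) (bnbK k) = b.
Proof.
  intros [i j] k Hk. destruct k as [|[|[|k]]]; simpl;
  try (f_equal; lia); lia.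
Qed.

(* At a vertex V of a white triangle, the segment containing V in its interior
   cannot enter the triangle, so the two reference angles at V (one for each
   side of the triangle through V) add up to PI minus the triangle's angle at V;
   summing over the three vertices gives 3 PI - PI = 2 PI, i.e. flow 1 out of w.
   A black segment carries three collinear vertices of T. At the middle one the
   segment itself is the one containing it in its interior, so both angles
   vanish. At each of the two endpoints the two white triangles lying along the
   segment have their apices on opposite sides of it (otherwise they would
   overlap), so the two angles there are supplementary; again the total is
   2 PI, i.e. flow -1 into b. *)

From Stdlib Require Import Reals ZArith Lra Lia ClassicalEpsilon.
Open Scope R_scope.

Lemma sqr_pos x : x <> 0 -> 0 < x * x.
Proof. intros h; apply Rsqr_pos_lt in h; unfold Rsqr in h; lra. Qed.

Lemma psub_padd v w : psub (padd v w) v = w.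
Proof. destruct v, w; unfold padd, psub; simpl; f_equal; ring. Qed.

Lemma psub_swap x y : psub x y = pscale (-1) (psub y x).
Proof. destruct x, y; unfold psub, pscale; simpl; f_equal; ring. Qed.

Lemma pscale1 x : pscale 1 x = x.
Proof. destruct x; unfold pscale; simpl; f_equal; ring. Qed.

Lemma pscale_pscale a b d : pscale a (pscale b d) = pscale (a * b) d.
Proof. destruct d; unfold pscale; simpl; f_equal; ring. Qed.

Lemma cross_pscale_l u a d : cross (pscale a d) u = a * cross d u.
Proof. destruct u, d; unfold cross, pscale; simpl; ring. Qed.

Lemma cross_pscale_r u a d : cross u (pscale a d) = a * cross u d.
Proof. destruct u, d; unfold cross, pscale; simpl; ring. Qed.

Lemma cross_antisym u v : cross v u = - cross u v.
Proof. destruct u, v; unfold cross; simpl; ring. Qed.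

Lemma dot_pscale a d : dot (pscale a d) (pscale a d) = a * a * dot d d.
Proof. destruct d; unfold dot, pscale; simpl; ring. Qed.

Lemma dot_pscale_pos a d : a <> 0 -> 0 < dot d d -> 0 < dot (pscale a d) (pscale a d).
Proof. intros. rewrite dot_pscale. apply Rmult_lt_0_compat; auto using sqr_pos. Qed.

Lemma dot_cross_lagrange u v : dot u v * dot u v + cross u v * cross u v = dot u u * dot v v.
Proof. destruct u, v; unfold dot, cross; simpl; ring. Qed.

Lemma dot_self_pos_of_cross u v : cross u v <> 0 -> 0 < dot u u /\ 0 < dot v v.
Proof.
  intros H. assert (Hs := sqr_pos _ H). assert (L := dot_cross_lagrange u v).
  assert (0 <= dot u u) by (destruct u; unfold dot; simpl; nra).
  assert (0 <= dot v v) by (destruct v; unfold dot; simpl; nra).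
  assert (0 <= dot u v * dot u v) by nra.
  split; nra.
Qed.

Lemma parallel_of_cross0 u d : cross u d = 0 -> 0 < dot d d -> u = pscale (dot u d / dot d d) d.
Proof.
  destruct u as [u1 u2], d as [d1 d2]; unfold cross, dot, pscale; simpl; intros H Hd.
  f_equal; field_simplify_eq; try lra.
  - assert (u1*d2*d2 = u2*d1*d2) by (replace (u1*d2) with (u2*d1) by lra; ring). lra.
  - assert (u1*d2*d1 = u2*d1*d1) by (replace (u1*d2) with (u2*d1) by lra; ring). lra.
Qed.

Lemma cross_triangle_rot A B C : cross (psub C B) (psub A B) = cross (psub B A) (psub C A).
Proof. destruct A, B, C; unfold cross, psub; simpl; ring. Qed.

Lemma nondeg_tri_perm p q r : cross (psub q p) (psub r p) <> 0 ->
  cross (psub r p) (psub q p) <> 0 /\ cross (psub p q) (psub r q) <> 0 /\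
  cross (psub r q) (psub p q) <> 0 /\ cross (psub p r) (psub q r) <> 0 /\
  cross (psub q r) (psub p r) <> 0.
Proof.
  intros H.
  assert (E1 : cross (psub r p) (psub q p) = - cross (psub q p) (psub r p))
    by (destruct p, q, r; unfold cross, psub; simpl; ring).
  assert (E2 : cross (psub p q) (psub r q) = - cross (psub q p) (psub r p))
    by (destruct p, q, r; unfold cross, psub; simpl; ring).
  assert (E3 : cross (psub q r) (psub p r) = - cross (psub q p) (psub r p))
    by (destruct p, q, r; unfold cross, psub; simpl; ring).
  rewrite E1, E2, E3, cross_triangle_rot, (cross_triangle_rot q r p), cross_triangle_rot.
  repeat split; intro h; apply H; lra.
Qed.

Lemma pnorm_pos u : 0 < dot u u -> 0 < pnorm u.
Proof. intros; unfold pnorm; apply sqrt_lt_R0; auto. Qed.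

Lemma pnorm_sqr u : pnorm u * pnorm u = dot u u.
Proof. unfold pnorm; apply sqrt_sqrt. destruct u; unfold dot; simpl; nra. Qed.

Lemma pnorm_pscale l v : pnorm (pscale l v) = Rabs l * pnorm v.
Proof.
  unfold pnorm; rewrite dot_pscale.
  replace (l * l * dot v v) with (Rsqr l * dot v v) by (unfold Rsqr; ring).
  rewrite sqrt_mult_alt by apply Rle_0_sqr. rewrite sqrt_Rsqr_abs. auto.
Qed.

Lemma cos_ratio_bound u v : 0 < dot u u -> 0 < dot v v ->
  -1 <= dot u v / (pnorm u * pnorm v) <= 1.
Proof.
  intros Hu Hv.
  assert (Pu := pnorm_pos u Hu). assert (Pv := pnorm_pos v Hv).
  assert (Su := pnorm_sqr u). assert (Sv := pnorm_sqr v).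
  assert (L := dot_cross_lagrange u v).
  assert (PP : 0 < pnorm u * pnorm v) by nra.
  assert (Habs : - (pnorm u * pnorm v) <= dot u v <= pnorm u * pnorm v) by (split; nra).
  split; apply (Rmult_le_reg_r (pnorm u * pnorm v)); try lra;
  unfold Rdiv; rewrite Rmult_assoc, Rinv_l by lra; lra.
Qed.

Lemma cos_uangle u v : 0 < dot u u -> 0 < dot v v ->
  cos (uangle u v) = dot u v / (pnorm u * pnorm v).
Proof. intros; unfold uangle; apply cos_acos, cos_ratio_bound; auto. Qed.

Lemma sin_uangle u v : 0 < dot u u -> 0 < dot v v ->
  sin (uangle u v) = Rabs (cross u v) / (pnorm u * pnorm v).
Proof.
  intros Hu Hv. unfold uangle. rewrite sin_acos by (apply cos_ratio_bound; auto).
  assert (Pu := pnorm_pos u Hu). assert (Pv := pnorm_pos v Hv).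
  assert (Su := pnorm_sqr u). assert (Sv := pnorm_sqr v).
  assert (L := dot_cross_lagrange u v).
  replace (1 - (dot u v / (pnorm u * pnorm v))²) with (Rsqr (cross u v / (pnorm u * pnorm v))).
  - rewrite sqrt_Rsqr_abs. unfold Rdiv. rewrite Rabs_mult, (Rabs_pos_eq (/ _)); auto.
    left; apply Rinv_0_lt_compat; nra.
  - unfold Rsqr. rewrite <- Su, <- Sv in L.
    field_simplify_eq; [nra | split; lra].
Qed.

Lemma uangle_sym u v : uangle u v = uangle v u.
Proof.
  unfold uangle. rewrite (Rmult_comm (pnorm u)).
  replace (dot u v) with (dot v u) by (destruct u, v; unfold dot; simpl; ring). reflexivity.
Qed.

Lemma uangle_pscale_pos_r u v l : 0 < dot u u -> 0 < dot v v -> 0 < l ->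
  uangle u (pscale l v) = uangle u v.
Proof.
  intros Hu Hv Hl. unfold uangle. rewrite pnorm_pscale, Rabs_pos_eq by lra.
  assert (Pu := pnorm_pos u Hu). assert (Pv := pnorm_pos v Hv).
  replace (dot u (pscale l v)) with (l * dot u v) by (destruct u, v; unfold dot, pscale; simpl; ring).
  f_equal. field. split; lra.
Qed.

Lemma uangle_pscale_pos_l u v l : 0 < dot u u -> 0 < dot v v -> 0 < l ->
  uangle (pscale l u) v = uangle u v.
Proof. intros. rewrite uangle_sym, uangle_pscale_pos_r, uangle_sym; auto. Qed.

Lemma uangle_pscale_neg_r u v l : 0 < dot u u -> 0 < dot v v -> l < 0 ->
  uangle u (pscale l v) = PI - uangle u v.
Proof.
  intros Hu Hv Hl. unfold uangle. rewrite pnorm_pscale, Rabs_left by lra.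
  assert (Pu := pnorm_pos u Hu). assert (Pv := pnorm_pos v Hv).
  rewrite <- acos_opp.
  replace (dot u (pscale l v)) with (l * dot u v) by (destruct u, v; unfold dot, pscale; simpl; ring).
  f_equal. field. split; lra.
Qed.

Lemma uangle_opp u v : 0 < dot u u -> 0 < dot v v ->
  uangle (pscale (-1) u) (pscale (-1) v) = uangle u v.
Proof.
  intros. assert (dot (pscale (-1) u) (pscale (-1) u) = dot u u) by (rewrite dot_pscale; ring).
  rewrite uangle_pscale_neg_r by (auto; lra).
  rewrite uangle_sym, uangle_pscale_neg_r by (auto; lra). rewrite uangle_sym. ring.
Qed.

Lemma cross_chain_signs u v w : cross u v * cross v w > 0 -> cross u v * cross u w > 0 ->
  (0 < cross u v /\ 0 < cross v w /\ 0 < cross u w) \/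
  (cross u v < 0 /\ cross v w < 0 /\ cross u w < 0).
Proof.
  intros H1 H2.
  destruct (Rtotal_order 0 (cross u v)) as [h|[h|h]]; [left | rewrite <- h in H1; lra | right];
    repeat split; nra.
Qed.

(* [v] lies inside the angle [u w], so the two angles add up to less than [PI]. *)
Lemma sin_uangle_add_pos u v w : 0 < dot u u -> 0 < dot v v -> 0 < dot w w ->
  cross u v * cross v w > 0 -> cross u v * cross u w > 0 ->
  0 < sin (uangle u v + uangle v w).
Proof.
  intros Hu Hv Hw H1 H2.
  assert (Pu := pnorm_pos u Hu). assert (Pv := pnorm_pos v Hv). assert (Pw := pnorm_pos w Hw).
  assert (Id : cross u v * dot v w + dot u v * cross v w = dot v v * cross u w)
    by (destruct u, v, w; unfold dot, cross; simpl; ring).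
  assert (Pden : 0 < pnorm u * (pnorm v * pnorm v) * pnorm w)
    by (apply Rmult_lt_0_compat; [apply Rmult_lt_0_compat; nra | lra]).
  rewrite sin_plus, !sin_uangle, !cos_uangle by auto.
  destruct (cross_chain_signs u v w H1 H2) as [[? [? ?]]|[? [? ?]]].
  - rewrite !Rabs_pos_eq by lra.
    replace (cross u v / (pnorm u * pnorm v) * (dot v w / (pnorm v * pnorm w)) +
      dot u v / (pnorm u * pnorm v) * (cross v w / (pnorm v * pnorm w))) with
      ((cross u v * dot v w + dot u v * cross v w) / (pnorm u * (pnorm v * pnorm v) * pnorm w))
      by (field; lra).
    rewrite Id. apply Rdiv_lt_0_compat; nra.
  - rewrite !Rabs_left by lra.
    replace (- cross u v / (pnorm u * pnorm v) * (dot v w / (pnorm v * pnorm w)) +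
      dot u v / (pnorm u * pnorm v) * (- cross v w / (pnorm v * pnorm w))) with
      (- (cross u v * dot v w + dot u v * cross v w) / (pnorm u * (pnorm v * pnorm v) * pnorm w))
      by (field; lra).
    rewrite Id. apply Rdiv_lt_0_compat; nra.
Qed.

Lemma uangle_add u v w : 0 < dot u u -> 0 < dot v v -> 0 < dot w w ->
  cross u v * cross v w > 0 -> cross u v * cross u w > 0 ->
  uangle u v + uangle v w = uangle u w.
Proof.
  intros Hu Hv Hw H1 H2.
  assert (Pu := pnorm_pos u Hu). assert (Pv := pnorm_pos v Hv). assert (Pw := pnorm_pos w Hw).
  assert (Sv := pnorm_sqr v).
  assert (Id : dot u v * dot v w - cross u v * cross v w = dot v v * dot u w)
    by (destruct u, v, w; unfold dot, cross; simpl; ring).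
  assert (Ba := acos_bound (dot u v / (pnorm u * pnorm v))).
  assert (Bb := acos_bound (dot v w / (pnorm v * pnorm w))).
  fold (uangle u v) (uangle v w) in Ba, Bb.
  assert (Hs := sin_uangle_add_pos u v w Hu Hv Hw H1 H2).
  assert (Hlt : uangle u v + uangle v w < PI).
  { destruct (Rlt_dec (uangle u v + uangle v w) PI) as [h|h]; auto.
    assert (sin (uangle u v + uangle v w) <= 0) by (apply sin_le_0; lra). lra. }
  transitivity (acos (cos (uangle u v + uangle v w))); [symmetry; apply acos_cos; lra|].
  unfold uangle at 3. f_equal.
  rewrite cos_plus, !sin_uangle, !cos_uangle by auto.
  rewrite <- Sv in Id.
  destruct (cross_chain_signs u v w H1 H2) as [[? [? ?]]|[? [? ?]]];
    [rewrite !Rabs_pos_eq by lra | rewrite !Rabs_left by lra];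
    field_simplify_eq; nra.
Qed.

Lemma triangle_angle_sum A B C : cross (psub B A) (psub C A) <> 0 ->
  uangle (psub B A) (psub C A) + uangle (psub A B) (psub C B) +
  uangle (psub A C) (psub B C) = PI.
Proof.
  intros H.
  assert (E1 : cross (psub C A) (psub C B) = cross (psub B A) (psub C A))
    by (destruct A, B, C; unfold cross, psub; simpl; ring).
  assert (E2 : cross (psub B A) (psub C B) = cross (psub B A) (psub C A))
    by (destruct A, B, C; unfold cross, psub; simpl; ring).
  destruct (dot_self_pos_of_cross _ _ H) as [Hab Hac].
  assert (H' : cross (psub C A) (psub C B) <> 0) by (rewrite E1; auto).
  destruct (dot_self_pos_of_cross _ _ H') as [_ Hbc].
  assert (Hsq := sqr_pos _ H).
  rewrite (psub_swap A C), (psub_swap B C), uangle_opp by auto.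
  rewrite (psub_swap A B), (uangle_sym (pscale (-1) (psub B A))), uangle_pscale_neg_r,
    (uangle_sym (psub C B)) by (auto; lra).
  rewrite <- (uangle_add (psub B A) (psub C A) (psub C B)); auto; [ring | nra | nra].
Qed.

(* [a1 d] lies beyond [r1] and [a2 d] beyond [r2] (seen from the angle [r1 r2]),
   and the line of [d] misses the open cone spanned by [r1] and [r2]; the three
   angles then fill a half-turn. *)
Lemma uangle_outside_cone r1 r2 d a1 a2 : cross r1 r2 <> 0 -> 0 < dot d d ->
  cross r1 d <> 0 -> cross r2 d <> 0 ->
  ~ (cross d r2 * cross r1 r2 > 0 /\ cross r1 d * cross r1 r2 > 0) ->
  ~ (cross d r2 * cross r1 r2 < 0 /\ cross r1 d * cross r1 r2 < 0) ->
  a1 * cross r1 d * cross r1 r2 < 0 -> a2 * cross r2 d * cross r2 r1 < 0 ->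
  uangle r1 (pscale a1 d) + uangle r2 (pscale a2 d) = PI - uangle r1 r2.
Proof.
  intros Hc Hd HX HY N1 N2 H1 H2.
  rewrite (cross_antisym r2 d) in N1, N2. rewrite (cross_antisym r1 r2) in H2.
  set (X := cross r1 d) in *. set (Y := cross r2 d) in *. set (c := cross r1 r2) in *.
  assert (Hcc := sqr_pos _ Hc).
  assert (XY : 0 < X * Y).
  { assert (SX : X < 0 \/ 0 < X) by (destruct (Rtotal_order X 0) as [h|[h|h]]; auto; contradiction).
    assert (SY : Y < 0 \/ 0 < Y) by (destruct (Rtotal_order Y 0) as [h|[h|h]]; auto; contradiction).
    assert (SC : c < 0 \/ 0 < c) by (destruct (Rtotal_order c 0) as [h|[h|h]]; auto; contradiction).
    destruct SX, SY, SC; try nra; exfalso; first [apply N1; split; nra | apply N2; split; nra]. }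
  assert (A12 : a1 * a2 < 0).
  { assert (a1 * a2 * (X * Y) * (c * c) < 0) by nra.
    destruct (Rtotal_order (a1 * a2) 0) as [h|[h|h]]; auto; [rewrite h in *; lra |].
    assert (0 < a1 * a2 * (X * Y)) by (apply Rmult_lt_0_compat; auto).
    assert (0 < a1 * a2 * (X * Y) * (c * c)) by (apply Rmult_lt_0_compat; auto). lra. }
  assert (Ha2 : a2 <> 0) by (intro h; rewrite h in A12; lra).
  destruct (dot_self_pos_of_cross _ _ Hc) as [D1 D2].
  set (u := pscale a2 d).
  assert (Du : 0 < dot u u) by (apply dot_pscale_pos; auto).
  replace (pscale a1 d) with (pscale (a1 / a2) u)
    by (unfold u; rewrite pscale_pscale; f_equal; field; auto).
  rewrite uangle_pscale_neg_r; auto.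
  2:{ replace (a1 / a2) with ((a1 * a2) / (a2 * a2)) by (field; auto).
      apply Rdiv_neg_pos; [exact A12 | exact (sqr_pos _ Ha2)]. }
  rewrite <- (uangle_add r1 r2 u); auto; [ring | |];
    unfold u; rewrite cross_pscale_r; fold X Y c; nra.
Qed.

(* [a1 d] and [a2 d] point to opposite sides of the line of [r] (as [qg] and
   [qh] do), so they are opposite rays. *)
Lemma uangle_opposite_rays r d qg qh a1 a2 s : 0 < dot r r -> 0 < dot d d -> 0 < s ->
  cross r d <> 0 -> cross r qg * cross r qh < 0 ->
  a1 * (s * cross r d * (s * cross r qg)) < 0 -> a2 * (cross r d * cross r qh) < 0 ->
  uangle (pscale s r) (pscale a1 d) + uangle r (pscale a2 d) = PI.
Proof.
  intros Dr Hd Hs X OPP Ha1 Ha2.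
  assert (A12 : a1 * a2 < 0).
  { assert (P1 : 0 < (a1 * (s * cross r d * (s * cross r qg))) * (a2 * (cross r d * cross r qh)))
      by nra.
    replace ((a1 * (s * cross r d * (s * cross r qg))) * (a2 * (cross r d * cross r qh)))
      with ((a1 * a2) * ((s * s) * (cross r d * cross r d)) * (cross r qg * cross r qh)) in P1
      by ring.
    assert (P2 : 0 < (s * s) * (cross r d * cross r d))
      by (apply Rmult_lt_0_compat; [nra | apply sqr_pos; auto]).
    destruct (Rtotal_order (a1 * a2) 0) as [h|[h|h]]; auto; exfalso; [rewrite h in P1; lra|].
    assert (0 < (a1 * a2) * ((s * s) * (cross r d * cross r d))) by (apply Rmult_lt_0_compat; auto).
    nra. }
  assert (Ha2' : a2 <> 0) by (intro h; rewrite h in A12; lra).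
  assert (Ha1' : a1 <> 0) by (intro h; rewrite h in A12; lra).
  rewrite uangle_pscale_pos_l by (auto; apply dot_pscale_pos; auto).
  replace (pscale a1 d) with (pscale (a1 / a2) (pscale a2 d))
    by (rewrite pscale_pscale; f_equal; field; auto).
  assert (Da2 : 0 < dot (pscale a2 d) (pscale a2 d)) by (apply dot_pscale_pos; auto).
  rewrite uangle_pscale_neg_r; auto; [ring|].
  replace (a1 / a2) with ((a1 * a2) / (a2 * a2)) by (field; auto).
  apply Rdiv_neg_pos; [exact A12 | exact (sqr_pos _ Ha2')].
Qed.

Lemma collinear_param P0 P1 P2 : cross (psub P1 P0) (psub P2 P0) = 0 ->
  P1 <> P0 -> P2 <> P1 -> 0 < dot (psub P2 P0) (psub P2 P0) ->
  exists l, l <> 0 /\ l <> 1 /\ psub P1 P0 = pscale l (psub P2 P0).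
Proof.
  intros Col N10 N21 HD.
  assert (EL := parallel_of_cross0 _ _ Col HD). eexists; split; [|split]; [| |exact EL].
  - intro h. rewrite h in EL. apply N10.
    destruct P0, P1; unfold psub, pscale in EL; simpl in EL; injection EL as e1 e2. f_equal; lra.
  - intro h. rewrite h in EL. apply N21.
    destruct P0, P1, P2; unfold psub, pscale in EL; simpl in EL; injection EL as e1 e2. f_equal; lra.
Qed.

Lemma collinear_ratios P0 P1 P2 l : psub P1 P0 = pscale l (psub P2 P0) -> l <> 1 ->
  psub P0 P1 = pscale (- l / (1 - l)) (psub P2 P1) /\ psub P1 P2 = pscale (1 - l) (psub P0 P2).
Proof.
  destruct P0, P1, P2; unfold psub, pscale; simpl; intros E Hl; injection E as e1 e2.
  split; f_equal; try (field_simplify_eq; [nra | lra]); nra.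
Qed.

(* Exactly one of three collinear points lies between the other two. *)
Lemma collinear_two_endpoints (x l : R) : l <> 0 -> l <> 1 ->
  (if Rlt_dec 0 l then x else 0) + (if Rlt_dec 0 (- l / (1 - l)) then x else 0) +
  (if Rlt_dec 0 (1 - l) then x else 0) = 2 * x.
Proof.
  intros H0 H1.
  assert (Sign : 0 < - l / (1 - l) <-> l < 0 \/ 1 < l).
  { split.
    - intros h. destruct (Rtotal_order l 0) as [?|[?|?]]; [left; lra | lra |].
      destruct (Rtotal_order l 1) as [?|[?|?]]; [|lra | right; lra].
      exfalso. assert (- l / (1 - l) < 0) by (apply Rdiv_neg_pos; lra). lra.
    - intros [h|h]; [apply Rdiv_lt_0_compat; lra|].
      replace (- l / (1 - l)) with (l / (l - 1)) by (field; lra). apply Rdiv_lt_0_compat; lra. }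
  destruct (Rlt_dec 0 l), (Rlt_dec 0 (- l / (1 - l))) as [h|h], (Rlt_dec 0 (1 - l));
    first [ lra | apply Sign in h; lra
          | exfalso; apply h, Sign; first [left; lra | right; lra] ].
Qed.

(* If [G - E = m (H - E)] with [0 < m < 1] and [pg], [ph] lie on the same side
   of line [EH], the open triangles [E G pg] and [E H ph] overlap. *)
Lemma oconv3_overlap_coord (r1 r2 q1 q2 s1 s2 m : R) : 0 < m < 1 ->
  (r1*q2 - r2*q1) * (r1*s2 - r2*s1) > 0 ->
  exists b t b' t', 0 < b /\ 0 < t /\ b + t < 1 /\ 0 < b' /\ 0 < t' /\ b' + t' < 1 /\
    b*m*r1 + t*q1 = b'*r1 + t'*s1 /\ b*m*r2 + t*q2 = b'*r2 + t'*s2.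
Proof.
  intros Hm Hp.
  set (c := r1*q2 - r2*q1) in *. set (c' := r1*s2 - r2*s1) in *.
  assert (Hc : c <> 0) by (intro h; rewrite h in Hp; lra).
  set (be := (s1*q2 - s2*q1)/c). set (ga := c'/c).
  assert (Hga : 0 < ga).
  { unfold ga; replace (c'/c) with ((c*c')/(c*c)) by (field; auto).
    apply Rdiv_lt_0_compat; auto using sqr_pos. }
  (* With [s = be r + ga q] and [ga > 0], the point [m/2 r + ep s] lies in both
     triangles for small [ep]. *)
  assert (S1 : s1 = be*r1 + ga*q1) by (unfold be, ga, c, c' in *; field_simplify_eq; auto; ring).
  assert (S2 : s2 = be*r2 + ga*q2) by (unfold be, ga, c, c' in *; field_simplify_eq; auto; ring).
  clearbody be ga.
  set (K := 1 + Rabs be + ga).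
  assert (Hab := Rle_abs be). assert (Hab' := Rle_abs (- be)). rewrite Rabs_Ropp in Hab'.
  assert (K1 : 1 < K) by (unfold K; lra).
  assert (Hb : - K < be < K) by (unfold K; lra).
  assert (Hg : ga < K) by (unfold K; lra).
  assert (Hbg : be + ga < 2 * K) by (unfold K; lra).
  set (ep := m / (4*K)).
  assert (Hep : 0 < ep < 1/4).
  { unfold ep; split; [apply Rdiv_lt_0_compat; lra|].
    apply Rmult_lt_reg_r with (4*K); [lra|]. unfold Rdiv; rewrite Rmult_assoc, Rinv_l; lra. }
  exists (1/2 + ep*be/m), (ep*ga), (m/2), ep.
  assert (E1 : ep * be / m = be / (4*K)) by (unfold ep; field; lra).
  assert (E2 : ep * ga = m * (ga / (4*K))) by (unfold ep; field; lra).
  assert (B1 : - 1/4 < be / (4*K) < 1/4).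
  { split; apply Rmult_lt_reg_r with (4*K); try lra; field_simplify; lra. }
  assert (B2 : 0 < ga / (4*K) < 1/4).
  { split; [apply Rdiv_lt_0_compat; lra|].
    apply Rmult_lt_reg_r with (4*K); try lra; field_simplify; lra. }
  assert (B3 : be / (4*K) + ga / (4*K) < 1/2).
  { replace (be / (4*K) + ga / (4*K)) with ((be + ga)/(4*K)) by (field; lra).
    apply Rmult_lt_reg_r with (4*K); [lra|]. unfold Rdiv; rewrite Rmult_assoc, Rinv_l; lra. }
  rewrite E1, E2.
  repeat split; try lra; try nra.
  - rewrite S1. unfold ep. field. lra.
  - rewrite S2. unfold ep. field. lra.
Qed.

Lemma oconv3_overlap E G H pg ph m : psub G E = pscale m (psub H E) -> 0 < m < 1 ->
  cross (psub H E) (psub pg E) * cross (psub H E) (psub ph E) > 0 ->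
  exists z, oconv3 E G pg z /\ oconv3 E H ph z.
Proof.
  intros EG Hm Hp.
  destruct E as [e1 e2], G as [g1 g2], H as [h1 h2], pg as [p1 p2], ph as [q1 q2].
  unfold psub, pscale, cross in *; simpl in *. injection EG as EG1 EG2.
  destruct (oconv3_overlap_coord (h1-e1) (h2-e2) (p1-e1) (p2-e2) (q1-e1) (q2-e2) m Hm Hp)
    as [b [t [b' [t' [Hb [Ht [Hbt [Hb' [Ht' [Hbt' [Z1 Z2]]]]]]]]]]].
  exists (e1 + b'*(h1-e1) + t'*(q1-e1), e2 + b'*(h2-e2) + t'*(q2-e2)). split.
  - exists (1 - b - t), b, t. repeat split; try lra.
    unfold padd, pscale; simpl. f_equal; nra.
  - exists (1 - b' - t'), b', t'. repeat split; try lra.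
    unfold padd, pscale; simpl. f_equal; nra.
Qed.

Lemma conv3_swap12 p q r z : conv3 p q r z -> conv3 q p r z.
Proof.
  intros [a [b [c [Ha [Hb [Hc [Hs Hz]]]]]]]. exists b, a, c. repeat split; auto; try lra.
  subst. destruct p, q, r; unfold padd, pscale; simpl; f_equal; ring.
Qed.

Lemma conv3_swap23 p q r z : conv3 p q r z -> conv3 p r q z.
Proof.
  intros [a [b [c [Ha [Hb [Hc [Hs Hz]]]]]]]. exists a, c, b. repeat split; auto; try lra.
  subst. destruct p, q, r; unfold padd, pscale; simpl; f_equal; ring.
Qed.

Lemma oconv3_swap12 p q r z : oconv3 p q r z -> oconv3 q p r z.
Proof.
  intros [a [b [c [Ha [Hb [Hc [Hs Hz]]]]]]]. exists b, a, c. repeat split; auto; try lra.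
  subst. destruct p, q, r; unfold padd, pscale; simpl; f_equal; ring.
Qed.

Lemma oconv3_swap23 p q r z : oconv3 p q r z -> oconv3 p r q z.
Proof.
  intros [a [b [c [Ha [Hb [Hc [Hs Hz]]]]]]]. exists a, c, b. repeat split; auto; try lra.
  subst. destruct p, q, r; unfold padd, pscale; simpl; f_equal; ring.
Qed.

Ltac tri_perm H :=
  first [ exact H
        | apply conv3_swap12, H | apply conv3_swap23, H
        | apply conv3_swap12, conv3_swap23, H | apply conv3_swap23, conv3_swap12, H
        | apply conv3_swap12, conv3_swap23, conv3_swap12, H
        | apply oconv3_swap12, H | apply oconv3_swap23, H
        | apply oconv3_swap12, oconv3_swap23, H | apply oconv3_swap23, oconv3_swap12, H
        | apply oconv3_swap12, oconv3_swap23, oconv3_swap12, H ].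

Lemma conv3_p p q r : conv3 p q r p.
Proof. exists 1, 0, 0. repeat split; try lra. destruct p, q, r; unfold padd, pscale; simpl; f_equal; ring. Qed.

Lemma conv3_q p q r : conv3 p q r q.
Proof. apply conv3_swap12, conv3_p. Qed.

Lemma conv3_r p q r : conv3 p q r r.
Proof. apply conv3_swap23, conv3_q. Qed.

Lemma conv3_convex p q r x y t : conv3 p q r x -> conv3 p q r y -> 0 <= t <= 1 ->
  conv3 p q r (padd (pscale t x) (pscale (1 - t) y)).
Proof.
  intros [a [b [c [Ha [Hb [Hc [Hs Hz]]]]]]] [a' [b' [c' [Ha' [Hb' [Hc' [Hs' Hz']]]]]]] Ht.
  exists (t*a + (1-t)*a'), (t*b + (1-t)*b'), (t*c + (1-t)*c'). repeat split; try nra.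
  subst. destruct p, q, r; unfold padd, pscale; simpl; f_equal; ring.
Qed.

Lemma in_interior_mono (X Y : pt -> Prop) v :
  (forall z, X z -> Y z) -> in_interior X v -> in_interior Y v.
Proof. intros H [x [y [Hx [Hy Hb]]]]. exists x, y. auto. Qed.

Lemma in_interior_of_between (X : pt -> Prop) x y v t : x <> y -> X x -> X y -> 0 < t < 1 ->
  v = padd (pscale t x) (pscale (1 - t) y) -> in_interior X v.
Proof. intros. exists x, y. repeat split; auto. exists t. auto. Qed.

Lemma between_of_opposite x y v s : psub x v = pscale s (psub y v) -> s < 0 ->
  v = padd (pscale (1 / (1 - s)) x) (pscale (1 - 1 / (1 - s)) y).
Proof.
  destruct x, y, v; unfold psub, pscale, padd; simpl; intros E Hs; injection E as e1 e2.
  f_equal; field_simplify_eq; try lra; nra.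
Qed.

Lemma interior_vertex_opposite v e f :
  in_interior (conv3 v e f) v ->
  0 < dot (psub f v) (psub f v) /\ exists tau, 0 < tau /\ psub e v = pscale (- tau) (psub f v).
Proof.
  intros [x [y [[a [b [c [Ha [Hb [Hc [Habc Hx]]]]]]]
               [[a' [b' [c' [Ha' [Hb' [Hc' [Habc' Hy]]]]]]] [Hxy [t [Ht Hv]]]]]]].
  destruct v as [v1 v2], e as [e1 e2], f as [f1 f2], x as [x1 x2], y as [y1 y2].
  unfold padd, pscale in *; simpl in *.
  injection Hx as Hx1 Hx2. injection Hy as Hy1 Hy2. injection Hv as Hv1 Hv2.
  set (B := t*b + (1-t)*b'). set (G := t*c + (1-t)*c').
  assert (E1 : B*(e1-v1) + G*(f1-v1) = 0) by (unfold B, G; subst; nra).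
  assert (E2 : B*(e2-v2) + G*(f2-v2) = 0) by (unfold B, G; subst; nra).
  assert (X1 : x1 - v1 = b*(e1-v1) + c*(f1-v1)) by (subst; nra).
  assert (X2 : x2 - v2 = b*(e2-v2) + c*(f2-v2)) by (subst; nra).
  assert (Y1 : y1 - v1 = b'*(e1-v1) + c'*(f1-v1)) by (subst; nra).
  assert (Y2 : y2 - v2 = b'*(e2-v2) + c'*(f2-v2)) by (subst; nra).
  clear Hx1 Hx2 Hy1 Hy2 Hv1 Hv2.
  assert (Hne : ~ (x1 = y1 /\ x2 = y2)) by (intros [h1 h2]; apply Hxy; subst; auto).
  assert (B0 : B = 0 -> b = 0 /\ b' = 0) by (unfold B; intros; split; nra).
  assert (G0 : G = 0 -> c = 0 /\ c' = 0) by (unfold G; intros; split; nra).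
  assert (Bp : 0 <= B) by (unfold B; nra). assert (Gp : 0 <= G) by (unfold G; nra).
  assert (Fn : ~ (f1 - v1 = 0 /\ f2 - v2 = 0)).
  { intros [h1 h2]. rewrite h1, h2 in *.
    destruct (Req_dec B 0) as [hb|hb].
    - destruct (B0 hb). subst b b'. apply Hne. split; nra.
    - assert (e1 - v1 = 0) by (apply (Rmult_eq_reg_l B); lra).
      assert (e2 - v2 = 0) by (apply (Rmult_eq_reg_l B); lra).
      apply Hne; split; nra. }
  assert (Bpos : 0 < B).
  { destruct Bp as [|hb]; auto. exfalso. symmetry in hb. destruct (B0 hb). rewrite hb in *.
    destruct (Req_dec G 0) as [hg|hg].
    - destruct (G0 hg). subst. apply Hne; split; nra.
    - apply Fn; split; apply (Rmult_eq_reg_l G); lra. }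
  assert (Gpos : 0 < G).
  { destruct Gp as [|hg]; auto. exfalso. symmetry in hg. rewrite hg in *.
    assert (e1 - v1 = 0) by (apply (Rmult_eq_reg_l B); lra).
    assert (e2 - v2 = 0) by (apply (Rmult_eq_reg_l B); lra).
    destruct (G0 eq_refl). subst c c'. apply Hne; split; nra. }
  split.
  - unfold dot, psub; simpl.
    assert (S1 := Rle_0_sqr (f1 - v1)). assert (S2 := Rle_0_sqr (f2 - v2)). unfold Rsqr in S1, S2.
    destruct (Req_dec (f1 - v1) 0) as [h1|h1]; [destruct (Req_dec (f2 - v2) 0) as [h2|h2]|];
      [tauto | assert (Hs := sqr_pos _ h2) | assert (Hs := sqr_pos _ h1)]; lra.
  - exists (G / B). split; [apply Rdiv_lt_0_compat; auto|].
    unfold psub; simpl. f_equal; field_simplify_eq; auto; lra.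
Qed.

Lemma vertex_not_interior v Q1 Q2 s : psub Q1 v = pscale s (psub Q2 v) -> 0 < s ->
  0 < dot (psub Q2 v) (psub Q2 v) -> ~ in_interior (conv3 v Q1 Q2) v.
Proof.
  intros E Hs Hd Hi. destruct (interior_vertex_opposite _ _ _ Hi) as [_ [tau [Ht E']]].
  rewrite E in E'. destruct (psub Q2 v) as [d1 d2]. unfold pscale, dot in *; simpl in *.
  injection E' as e1 e2.
  assert (d1 = 0) by (apply (Rmult_eq_reg_l (s + tau)); lra).
  assert (d2 = 0) by (apply (Rmult_eq_reg_l (s + tau)); lra). subst. lra.
Qed.

Lemma interior_vertex_direction Q0 Q1 Q2 v :
  in_interior (conv3 Q0 Q1 Q2) v -> (v = Q0 \/ v = Q1 \/ v = Q2) ->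
  exists d a0 a1 a2, 0 < dot d d /\ Q0 = padd v (pscale a0 d) /\
    Q1 = padd v (pscale a1 d) /\ Q2 = padd v (pscale a2 d) /\
    (a0 < 0 \/ a1 < 0 \/ a2 < 0) /\ (a0 > 0 \/ a1 > 0 \/ a2 > 0).
Proof.
  assert (Z : forall v e, v = padd v (pscale 0 e))
    by (intros [? ?] [? ?]; unfold padd, pscale; simpl; f_equal; ring).
  assert (O : forall v e, e = padd v (pscale 1 (psub e v)))
    by (intros [? ?] [? ?]; unfold padd, pscale, psub; simpl; f_equal; ring).
  assert (T : forall v e tau f, psub e v = pscale (- tau) (psub f v) ->
                e = padd v (pscale (- tau) (psub f v)))
    by (intros [? ?] [? ?] ? [? ?] h; rewrite <- h; unfold padd, psub; simpl; f_equal; ring).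
  intros H [-> | [-> | ->]].
  - destruct (interior_vertex_opposite _ _ _ H) as [Hd [tau [Ht He]]].
    exists (psub Q2 Q0), 0, (-tau), 1. repeat split; auto; lra.
  - assert (H' : in_interior (conv3 Q1 Q0 Q2) Q1)
      by (eapply in_interior_mono; [|exact H]; apply conv3_swap12).
    destruct (interior_vertex_opposite _ _ _ H') as [Hd [tau [Ht He]]].
    exists (psub Q2 Q1), (-tau), 0, 1. repeat split; auto; lra.
  - assert (H' : in_interior (conv3 Q2 Q0 Q1) Q2).
    { eapply in_interior_mono; [|exact H]. intros z hz. apply conv3_swap12, conv3_swap23, hz. }
    destruct (interior_vertex_opposite _ _ _ H') as [Hd [tau [Ht He]]].
    exists (psub Q1 Q2), (-tau), 1, 0. repeat split; auto; lra.
Qed.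

Lemma bface_fnb f k : (k < 3)%nat -> bface (fnb f k) k = f.
Proof. destruct f as [a c]; intros Hk; destruct k as [|[|[|k]]]; simpl; try lia; f_equal; lia. Qed.

Lemma fnb_bface b k : (k < 3)%nat -> fnb (bface b k) k = b.
Proof. destruct b as [a c]; intros Hk; destruct k as [|[|[|k]]]; simpl; try lia; f_equal; lia. Qed.

Lemma sg_bface psi b k : (k < 3)%nat -> sg psi b (psi (bface b k)).
Proof.
  intros Hk. destruct k as [|[|[|k]]]; try lia; [apply conv3_p | apply conv3_q | apply conv3_r].
Qed.

Section TGraph.
Variable psi : face -> pt.
Hypothesis TG : is_TGraph psi.

Lemma tgraph_white_nondeg w :
  cross (psub (psi (wface w 1)) (psi (wface w 0))) (psub (psi (wface w 2)) (psi (wface w 0))) <> 0.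
Proof. destruct TG as [[d0 [d1 [d2 [_ H]]]] _]. apply (H w). Qed.

Lemma tgraph_black_collinear b :
  cross (psub (psi (bface b 1)) (psi (bface b 0))) (psub (psi (bface b 2)) (psi (bface b 0))) = 0.
Proof. destruct TG as [_ [H _]]. apply (H b). Qed.

Lemma tgraph_tri_disjoint w w' z : w <> w' -> tri_int psi w z -> tri_int psi w' z -> False.
Proof. destruct TG as [_ [_ [_ [_ [H _]]]]]. apply H. Qed.

Lemma tgraph_sg_tri_disjoint b w z : sg psi b z -> tri_int psi w z -> False.
Proof. destruct TG as [_ [_ [_ [_ [_ [H _]]]]]]. apply H. Qed.

Lemma tgraph_sg_meet b b' z z' : b <> b' ->
  sg psi b z -> sg psi b' z -> sg psi b z' -> sg psi b' z' -> z = z'.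
Proof. destruct TG as [_ [_ [_ [_ [_ [_ H]]]]]]. apply H. Qed.

Lemma int_seg_spec f :
  (int_seg psi f = fnb f 0 \/ int_seg psi f = fnb f 1 \/ int_seg psi f = fnb f 2) /\
  in_interior (sg psi (int_seg psi f)) (psi f) /\
  (forall k, (k < 3)%nat -> in_interior (sg psi (fnb f k)) (psi f) -> int_seg psi f = fnb f k).
Proof.
  destruct TG as [_ [_ [HV _]]]. destruct (HV f) as [_ D]. unfold is_endpoint in D.
  unfold int_seg.
  destruct (excluded_middle_informative (in_interior (sg psi (fnb f 0)) (psi f))) as [h0|h0];
    [|destruct (excluded_middle_informative (in_interior (sg psi (fnb f 1)) (psi f))) as [h1|h1]];
    [| |assert (in_interior (sg psi (fnb f 2)) (psi f)) by tauto];
    (split; [auto | split; auto]);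
    intros k Hk Hi; destruct k as [|[|[|k]]]; try lia; auto; exfalso; tauto.
Qed.

Lemma sg_int_seg f : sg psi (int_seg psi f) (psi f).
Proof.
  destruct (int_seg_spec f) as [[e|[e|e]] _]; rewrite e;
    [rewrite <- (bface_fnb f 0) at 2 | rewrite <- (bface_fnb f 1) at 2 |
     rewrite <- (bface_fnb f 2) at 2]; try lia; apply sg_bface; lia.
Qed.

Lemma theta_int_seg b f fo g : int_seg psi f = b -> theta psi b f fo g = 0.
Proof. intros e. unfold theta. destruct (excluded_middle_informative (int_seg psi f = b)); tauto. Qed.

Lemma opp_side_iff v o p a d : opp_side v o p (padd v (pscale a d)) <->
  a * (cross (psub o v) d * cross (psub o v) (psub p v)) < 0.
Proof. unfold opp_side. rewrite psub_padd, cross_pscale_r. split; intros; lra. Qed.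

(* The segment [int_seg f] lies on a line [psi f + R d] and extends to both
   sides of [psi f]; theta is the angle with the ray of that line on the far
   side of the white triangle. *)
Lemma theta_spec f : exists d, 0 < dot d d /\
 (forall i, (i < 3)%nat -> exists a, psi (bface (int_seg psi f) i) = padd (psi f) (pscale a d)) /\
 (exists a, a > 0 /\ sg psi (int_seg psi f) (padd (psi f) (pscale a d))) /\
 (exists a, a < 0 /\ sg psi (int_seg psi f) (padd (psi f) (pscale a d))) /\
 (forall b fo g, int_seg psi f <> b ->
    cross (psub (psi fo) (psi f)) d * cross (psub (psi fo) (psi f)) (psub (psi g) (psi f)) <> 0 ->
    exists a, a * (cross (psub (psi fo) (psi f)) d *
                   cross (psub (psi fo) (psi f)) (psub (psi g) (psi f))) < 0 /\
      theta psi b f fo g = uangle (psub (psi fo) (psi f)) (pscale a d)).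
Proof.
  destruct (int_seg_spec f) as [Hk [Hint _]].
  set (S := int_seg psi f) in *.
  assert (Hv : psi f = psi (bface S 0) \/ psi f = psi (bface S 1) \/ psi f = psi (bface S 2))
    by (destruct Hk as [e|[e|e]]; rewrite e, bface_fnb by lia; auto).
  destruct (interior_vertex_direction _ _ _ _ Hint Hv)
    as [d [a0 [a1 [a2 [Hd [E0 [E1 [E2 [Neg Pos]]]]]]]]].
  exists d. split; [auto|]. split; [|split; [|split]].
  - intros i Hi. destruct i as [|[|[|i]]]; try lia; eauto.
  - destruct Pos as [h|[h|h]]; [exists a0; rewrite <- E0 | exists a1; rewrite <- E1 |
      exists a2; rewrite <- E2]; (split; [auto | apply conv3_p || apply conv3_q || apply conv3_r]).
  - destruct Neg as [h|[h|h]]; [exists a0; rewrite <- E0 | exists a1; rewrite <- E1 |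
      exists a2; rewrite <- E2]; (split; [auto | apply conv3_p || apply conv3_q || apply conv3_r]).
  - intros b fo g Hb HK.
    set (K := cross (psub (psi fo) (psi f)) d * cross (psub (psi fo) (psi f)) (psub (psi g) (psi f))) in *.
    unfold theta. fold S.
    destruct (excluded_middle_informative (S = b)) as [e|_]; [contradiction|].
    set (v := psi f) in *. set (o := psi fo). set (p := psi g).
    destruct (excluded_middle_informative (opp_side v o p (psi (bface S 0)))) as [h0|h0].
    + exists a0. rewrite E0 in *. apply opp_side_iff in h0. rewrite psub_padd; auto.
    + destruct (excluded_middle_informative (opp_side v o p (psi (bface S 1)))) as [h1|h1].
      * exists a1. rewrite E1 in *. apply opp_side_iff in h1. rewrite psub_padd; auto.
      * (* neither [a0 d] nor [a1 d] is on the far side, so [a2 d] must be *)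
        exists a2. rewrite E0, E1, E2 in *. rewrite opp_side_iff in h0, h1. rewrite psub_padd.
        split; auto.
        change (cross (psub o v) d * cross (psub o v) (psub p v)) with K in h0, h1.
        apply Rnot_lt_le in h0. apply Rnot_lt_le in h1.
        assert (K < 0 \/ 0 < K) by (destruct (Rtotal_order K 0) as [h|[h|h]]; auto; contradiction).
        destruct H as [hK|hK]; destruct Neg as [n|[n|n]]; destruct Pos as [q|[q|q]]; nra.
Qed.

(* Two distinct segments through [v] cannot both leave [v] in the same
   direction: they would share a second point. *)
Lemma sg_no_common_ray b b' v x y k : b <> b' -> sg psi b v -> sg psi b x -> sg psi b' v ->
  sg psi b' y -> psub x v = pscale k (psub y v) -> 0 < k -> 0 < dot (psub y v) (psub y v) -> False.
Proof.
  intros Hbb Hv Hx Hv' Hy E Hk Hd.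
  set (s := 1 / (1 + k)). set (t := k / (1 + k)).
  assert (Z1 : sg psi b (padd (pscale s x) (pscale (1 - s) v)))
    by (apply conv3_convex; auto; unfold s; split; apply Rmult_le_reg_r with (1+k);
        try lra; field_simplify; lra).
  assert (Z2 : sg psi b' (padd (pscale t y) (pscale (1 - t) v)))
    by (apply conv3_convex; auto; unfold t; split; apply Rmult_le_reg_r with (1+k);
        try lra; field_simplify; lra).
  assert (EZ : padd (pscale s x) (pscale (1 - s) v) = padd (pscale t y) (pscale (1 - t) v)).
  { destruct x as [x1 x2], y as [y1 y2], v as [v1 v2]. unfold psub, pscale, padd in *; simpl in *.
    injection E as e1 e2. unfold s, t. f_equal; field_simplify_eq; try lra; nra. }
  rewrite EZ in Z1.
  assert (h := tgraph_sg_meet b b' _ v Hbb Z1 Z2 Hv Hv').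
  destruct y as [y1 y2], v as [v1 v2]. unfold psub, pscale, padd, dot in *; simpl in *.
  injection h as h1 h2.
  assert (Ht : t <> 0) by (unfold t; apply Rgt_not_eq, Rdiv_lt_0_compat; lra).
  assert (y1 - v1 = 0) by (apply Rmult_eq_reg_l with t; auto; nra).
  assert (y2 - v2 = 0) by (apply Rmult_eq_reg_l with t; auto; nra).
  nra.
Qed.

Lemma sg_not_parallel_int_seg S b v P d : S <> b -> sg psi S v -> sg psi b v -> sg psi b P ->
  0 < dot (psub P v) (psub P v) -> cross (psub P v) d = 0 -> 0 < dot d d ->
  (exists a, a > 0 /\ sg psi S (padd v (pscale a d))) ->
  (exists a, a < 0 /\ sg psi S (padd v (pscale a d))) -> False.
Proof.
  intros HS Hv Hv' HP HPd Hc Hd [ap [Hap Sp]] [an [Han Sn]].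
  assert (E := parallel_of_cross0 _ _ Hc Hd). set (k := dot (psub P v) d / dot d d) in *.
  assert (Hk : k <> 0) by (intro h; rewrite h in E; rewrite E, dot_pscale in HPd; lra).
  destruct (Rtotal_order k 0) as [h|[h|h]]; [|contradiction|].
  - apply (sg_no_common_ray b S v P (padd v (pscale an d)) (k / an)); auto.
    + rewrite psub_padd, pscale_pscale, E. f_equal. field. lra.
    + apply Rdiv_neg_neg; auto.
    + rewrite psub_padd. apply dot_pscale_pos; auto; lra.
  - apply (sg_no_common_ray b S v P (padd v (pscale ap d)) (k / ap)); auto.
    + rewrite psub_padd, pscale_pscale, E. f_equal. field. lra.
    + apply Rdiv_lt_0_compat; auto.
    + rewrite psub_padd. apply dot_pscale_pos; auto; lra.
Qed.

(* A segment through the vertex [v] of a white triangle [v P Q] cannot enter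
   the open angle [P v Q], since it would meet the open triangle near [v]. *)
Lemma sg_avoids_tri_angle S w v P Q y : sg psi S v -> sg psi S y ->
  (forall z, oconv3 v P Q z -> tri_int psi w z) ->
  cross (psub P v) (psub Q v) <> 0 ->
  cross (psub y v) (psub Q v) * cross (psub P v) (psub Q v) > 0 ->
  cross (psub P v) (psub y v) * cross (psub P v) (psub Q v) > 0 -> False.
Proof.
  intros Hv Hy Htri Hc H1 H2.
  set (c := cross (psub P v) (psub Q v)) in *.
  assert (Hcc := sqr_pos _ Hc).
  set (al := cross (psub y v) (psub Q v) / c). set (be := cross (psub P v) (psub y v) / c).
  assert (Hal : 0 < al).
  { unfold al; replace (cross (psub y v) (psub Q v) / c)
      with ((cross (psub y v) (psub Q v) * c) / (c * c)) by (field; auto).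
    apply Rdiv_lt_0_compat; lra. }
  assert (Hbe : 0 < be).
  { unfold be; replace (cross (psub P v) (psub y v) / c)
      with ((cross (psub P v) (psub y v) * c) / (c * c)) by (field; auto).
    apply Rdiv_lt_0_compat; lra. }
  set (t := 1 / (1 + al + be)).
  assert (Ht : 0 < t < 1).
  { unfold t; split; [apply Rdiv_lt_0_compat; lra|].
    apply Rmult_lt_reg_r with (1 + al + be); [lra|]. field_simplify; lra. }
  assert (t * al + t * be < 1).
  { unfold t. apply Rmult_lt_reg_r with (1 + al + be); [lra|]. field_simplify; lra. }
  apply (tgraph_sg_tri_disjoint S w (padd (pscale t y) (pscale (1 - t) v)));
    [apply conv3_convex; auto; lra|].
  apply Htri. exists (1 - t*al - t*be), (t*al), (t*be).
  repeat split; try nra.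
  unfold al, be, c. destruct y as [y1 y2], v as [v1 v2], P as [p1 p2], Q as [q1 q2].
  unfold padd, pscale, psub, cross in *; simpl in *. f_equal; field_simplify_eq; auto; ring.
Qed.

Lemma theta_pair_tri_vertex_on_int_seg V P Q bp bq : bp <> bq -> int_seg psi V = bp ->
  cross (psub (psi P) (psi V)) (psub (psi Q) (psi V)) <> 0 ->
  (psi P = psi (bface bp 0) \/ psi P = psi (bface bp 1) \/ psi P = psi (bface bp 2)) ->
  theta psi bp V P Q + theta psi bq V Q P =
  PI - uangle (psub (psi P) (psi V)) (psub (psi Q) (psi V)).
Proof.
  intros Hb HS Hc HP.
  rewrite theta_int_seg by auto.
  destruct (theta_spec V) as [d [Hd [Pts [_ [_ TH]]]]].
  rewrite HS in Pts.
  assert (HaP : exists aP, psi P = padd (psi V) (pscale aP d))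
    by (destruct HP as [e|[e|e]]; rewrite e; apply Pts; lia).
  destruct HaP as [aP EP].
  set (r2 := psub (psi Q) (psi V)) in *.
  assert (Er1 : psub (psi P) (psi V) = pscale aP d) by (rewrite EP; apply psub_padd).
  rewrite Er1 in Hc |- *.
  destruct (dot_self_pos_of_cross _ _ Hc) as [D1 D2].
  rewrite cross_pscale_l in Hc.
  assert (Hx : cross r2 d <> 0) by (intro h; rewrite cross_antisym, h in Hc; apply Hc; ring).
  assert (HaP0 : aP <> 0) by (intro h; rewrite h in Hc; apply Hc; ring).
  destruct (TH bq Q P) as [a [Ha Eth]].
  { rewrite HS; auto. }
  { rewrite EP, psub_padd, cross_pscale_r. fold r2.
    repeat apply Rmult_integral_contrapositive_currified; auto. }
  rewrite EP, psub_padd, cross_pscale_r in Ha. fold r2 in Ha |- *. rewrite Eth.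
  assert (X2 := sqr_pos _ Hx).
  assert (AA : a * aP < 0).
  { replace (a * (cross r2 d * (aP * cross r2 d))) with ((a * aP) * (cross r2 d * cross r2 d))
      in Ha by ring.
    destruct (Rtotal_order (a * aP) 0) as [h|[h|h]]; auto; [rewrite h in Ha; lra|].
    assert (0 < (a * aP) * (cross r2 d * cross r2 d)) by (apply Rmult_lt_0_compat; auto). lra. }
  replace (pscale a d) with (pscale (a / aP) (pscale aP d))
    by (rewrite pscale_pscale; f_equal; field; auto).
  rewrite uangle_pscale_neg_r; auto.
  - rewrite (uangle_sym r2). ring.
  - replace (a / aP) with ((a * aP) / (aP * aP)) by (field; auto).
    apply Rdiv_neg_pos; [exact AA | exact (sqr_pos _ HaP0)].
Qed.

Lemma theta_pair_tri_vertex_off_int_seg w V P Q bp bq :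
  int_seg psi V <> bp -> int_seg psi V <> bq ->
  cross (psub (psi P) (psi V)) (psub (psi Q) (psi V)) <> 0 ->
  sg psi bp (psi V) -> sg psi bp (psi P) -> sg psi bq (psi V) -> sg psi bq (psi Q) ->
  (forall z, oconv3 (psi V) (psi P) (psi Q) z -> tri_int psi w z) ->
  theta psi bp V P Q + theta psi bq V Q P =
  PI - uangle (psub (psi P) (psi V)) (psub (psi Q) (psi V)).
Proof.
  intros H1 H2 Hc Vp Pp Vq Qq Htri.
  destruct (theta_spec V) as [d [Hd [Pts [[ap [Hap Sp]] [[an [Han Sn]] TH]]]]].
  set (S := int_seg psi V) in *.
  assert (Sv : sg psi S (psi V)) by apply sg_int_seg.
  set (v := psi V) in *.
  set (r1 := psub (psi P) v) in *. set (r2 := psub (psi Q) v) in *.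
  destruct (dot_self_pos_of_cross _ _ Hc) as [D1 D2].
  assert (X1 : cross r1 d <> 0)
    by (intro h; apply (sg_not_parallel_int_seg S bp v (psi P) d); eauto).
  assert (X2 : cross r2 d <> 0)
    by (intro h; apply (sg_not_parallel_int_seg S bq v (psi Q) d); eauto).
  assert (Hc' : cross r2 r1 <> 0) by (rewrite cross_antisym; intro h; apply Hc; lra).
  destruct (TH bp P Q H1) as [a1 [Ha1 E1]]; [apply Rmult_integral_contrapositive_currified; auto|].
  destruct (TH bq Q P H2) as [a2 [Ha2 E2]]; [apply Rmult_integral_contrapositive_currified; auto|].
  fold v r1 r2 in E1, E2, Ha1, Ha2. rewrite E1, E2.
  apply uangle_outside_cone; auto; try (rewrite Rmult_assoc; auto).
  - intros [h1 h2].
    apply (sg_avoids_tri_angle S w v (psi P) (psi Q) (padd v (pscale ap d))); auto;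
      fold r1 r2; rewrite psub_padd, ?cross_pscale_l, ?cross_pscale_r.
    + assert (0 < ap * (cross d r2 * cross r1 r2)) by (apply Rmult_lt_0_compat; lra). lra.
    + assert (0 < ap * (cross r1 d * cross r1 r2)) by (apply Rmult_lt_0_compat; lra). lra.
  - intros [h1 h2].
    apply (sg_avoids_tri_angle S w v (psi P) (psi Q) (padd v (pscale an d))); auto;
      fold r1 r2; rewrite psub_padd, ?cross_pscale_l, ?cross_pscale_r.
    + assert (0 < - an * - (cross d r2 * cross r1 r2)) by (apply Rmult_lt_0_compat; lra). lra.
    + assert (0 < - an * - (cross r1 d * cross r1 r2)) by (apply Rmult_lt_0_compat; lra). lra.
Qed.

Lemma theta_pair_tri_vertex w V P Q bp bq : bp <> bq ->
  cross (psub (psi P) (psi V)) (psub (psi Q) (psi V)) <> 0 ->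
  sg psi bp (psi V) -> sg psi bp (psi P) -> sg psi bq (psi V) -> sg psi bq (psi Q) ->
  (psi P = psi (bface bp 0) \/ psi P = psi (bface bp 1) \/ psi P = psi (bface bp 2)) ->
  (psi Q = psi (bface bq 0) \/ psi Q = psi (bface bq 1) \/ psi Q = psi (bface bq 2)) ->
  (forall z, oconv3 (psi V) (psi P) (psi Q) z -> tri_int psi w z) ->
  theta psi bp V P Q + theta psi bq V Q P =
  PI - uangle (psub (psi P) (psi V)) (psub (psi Q) (psi V)).
Proof.
  intros Hb Hc Vp Pp Vq Qq HP HQ Htri.
  destruct (excluded_middle_informative (int_seg psi V = bp)) as [e|n1];
    [apply theta_pair_tri_vertex_on_int_seg; auto|].
  destruct (excluded_middle_informative (int_seg psi V = bq)) as [e|n2];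
    [|eapply theta_pair_tri_vertex_off_int_seg; eauto].
  rewrite Rplus_comm, uangle_sym. apply theta_pair_tri_vertex_on_int_seg; auto.
  rewrite cross_antisym. intro h; apply Hc; lra.
Qed.

(* Two white triangles sharing the point [v] and lying along the same ray from
   [v] cannot have their apices on the same side, or they would overlap. *)
Lemma tri_apices_opposite wg wh v G H pg ph s : wg <> wh ->
  psub G v = pscale s (psub H v) -> 0 < s -> s <> 1 ->
  cross (psub G v) (psub pg v) <> 0 -> cross (psub H v) (psub ph v) <> 0 ->
  (forall z, oconv3 v G pg z -> tri_int psi wg z) ->
  (forall z, oconv3 v H ph z -> tri_int psi wh z) ->
  cross (psub H v) (psub pg v) * cross (psub H v) (psub ph v) < 0.
Proof.
  intros Hw EG Hs Hs1 Ng Nh Tg Th.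
  rewrite EG, cross_pscale_l in Ng.
  destruct (Rtotal_order (cross (psub H v) (psub pg v) * cross (psub H v) (psub ph v)) 0)
    as [h|[h|h]]; auto; exfalso.
  - apply Rmult_integral in h; destruct h as [h|h]; [apply Ng; rewrite h|apply Nh]; lra.
  - destruct (Rtotal_order s 1) as [h1|[h1|h1]]; [|contradiction|].
    + destruct (oconv3_overlap v G H pg ph s EG (conj Hs h1) h) as [z [z1 z2]].
      exact (tgraph_tri_disjoint wg wh z Hw (Tg z z1) (Th z z2)).
    + assert (EH : psub H v = pscale (1 / s) (psub G v)).
      { rewrite EG, pscale_pscale. replace (1 / s * s) with 1 by (field; lra). apply eq_sym, pscale1. }
      destruct (oconv3_overlap v H G ph pg (1 / s) EH) as [z [z1 z2]].
      * split; [apply Rdiv_lt_0_compat; lra|].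
        apply Rmult_lt_reg_r with s; [lra|]. field_simplify; lra.
      * rewrite EG, !cross_pscale_l.
        assert (0 < s * s * (cross (psub H v) (psub pg v) * cross (psub H v) (psub ph v)))
          by (apply Rmult_lt_0_compat; nra). nra.
      * exact (tgraph_tri_disjoint wg wh z Hw (Tg z z2) (Th z z1)).
Qed.

Lemma theta_pair_sg_endpoint b E G H pg ph wg wh s : wg <> wh ->
  (forall z, sg psi b z -> conv3 (psi E) (psi G) (psi H) z) ->
  psub (psi G) (psi E) = pscale s (psub (psi H) (psi E)) -> 0 < s -> s <> 1 ->
  sg psi b (psi E) -> sg psi b (psi H) ->
  cross (psub (psi G) (psi E)) (psub (psi pg) (psi E)) <> 0 ->
  cross (psub (psi H) (psi E)) (psub (psi ph) (psi E)) <> 0 ->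
  (forall z, oconv3 (psi E) (psi G) (psi pg) z -> tri_int psi wg z) ->
  (forall z, oconv3 (psi E) (psi H) (psi ph) z -> tri_int psi wh z) ->
  theta psi b E G pg + theta psi b E H ph = PI.
Proof.
  intros Hw Hsub EG Hs Hs1 Eb Hb Ng Nh Tg Th.
  assert (OPP := tri_apices_opposite wg wh _ _ _ _ _ s Hw EG Hs Hs1 Ng Nh Tg Th).
  set (v := psi E) in *. set (r := psub (psi H) v) in *.
  set (qg := psub (psi pg) v) in *. set (qh := psub (psi ph) v) in *.
  destruct (dot_self_pos_of_cross _ _ Nh) as [Dr Dqh].
  assert (HS : int_seg psi E <> b).
  { intro e. destruct (int_seg_spec E) as [_ [Hi _]]. rewrite e in Hi.
    exact (vertex_not_interior v (psi G) (psi H) s EG Hs Dr (in_interior_mono _ _ _ Hsub Hi)). }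
  destruct (theta_spec E) as [d [Hd [Pts [[ap [Hap Sp]] [[an [Han Sn]] TH]]]]].
  fold v in Pts, Sp, Sn, TH.
  assert (X : cross r d <> 0)
    by (intro h; apply (sg_not_parallel_int_seg (int_seg psi E) b v (psi H) d); eauto using sg_int_seg).
  assert (Cg : cross r qg <> 0) by (intro h; rewrite h in OPP; lra).
  destruct (TH b G pg HS) as [a1 [Ha1 E1]].
  { rewrite EG, !cross_pscale_l. fold r qg.
    assert (Hss := sqr_pos s ltac:(lra)).
    replace (s * cross r d * (s * cross r qg)) with ((s * s) * (cross r d * cross r qg)) by ring.
    repeat apply Rmult_integral_contrapositive_currified; lra. }
  destruct (TH b H ph HS) as [a2 [Ha2 E2]]; [apply Rmult_integral_contrapositive_currified; auto|].
  rewrite E1, E2, EG. fold r qg qh in Ha1, Ha2 |- *.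
  rewrite EG, !cross_pscale_l in Ha1. fold r in Ha1.
  exact (uangle_opposite_rays r d qg qh a1 a2 s Dr Hd Hs X OPP Ha1 Ha2).
Qed.

Lemma theta_pair_sg_middle b k E G H pg ph s : (k < 3)%nat -> bface b k = E ->
  sg psi b (psi G) -> sg psi b (psi H) -> psi G <> psi H ->
  psub (psi G) (psi E) = pscale s (psub (psi H) (psi E)) -> s < 0 ->
  theta psi b E G pg + theta psi b E H ph = 0.
Proof.
  intros Hk HE Gb Hb GH EG Hs.
  assert (Hi : in_interior (sg psi (fnb E k)) (psi E)).
  { rewrite <- HE, fnb_bface, HE by exact Hk.
    apply (in_interior_of_between _ _ _ _ (1 / (1 - s)) GH Gb Hb).
    - split; [apply Rdiv_lt_0_compat; lra|].
      apply Rmult_lt_reg_r with (1 - s); [lra|]. field_simplify; lra.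
    - exact (between_of_opposite _ _ _ _ EG Hs). }
  destruct (int_seg_spec E) as [_ [_ U]].
  rewrite !theta_int_seg; [ring | |]; rewrite (U k Hk Hi), <- HE, fnb_bface; auto.
Qed.

Lemma theta_pair_sg b k E G H pg ph wg wh s : wg <> wh ->
  (forall z, sg psi b z -> conv3 (psi E) (psi G) (psi H) z) ->
  (k < 3)%nat -> bface b k = E -> sg psi b (psi G) -> sg psi b (psi H) ->
  psub (psi G) (psi E) = pscale s (psub (psi H) (psi E)) -> s <> 1 ->
  cross (psub (psi G) (psi E)) (psub (psi pg) (psi E)) <> 0 ->
  cross (psub (psi H) (psi E)) (psub (psi ph) (psi E)) <> 0 ->
  (forall z, oconv3 (psi E) (psi G) (psi pg) z -> tri_int psi wg z) ->
  (forall z, oconv3 (psi E) (psi H) (psi ph) z -> tri_int psi wh z) ->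
  theta psi b E G pg + theta psi b E H ph = if Rlt_dec 0 s then PI else 0.
Proof.
  intros Hw Hsub Hk HE Gb Hb EG Hs1 Ng Nh Tg Th.
  destruct (Rlt_dec 0 s) as [Hs|Hs].
  - assert (Eb : sg psi b (psi E)) by (rewrite <- HE; apply sg_bface; exact Hk).
    exact (theta_pair_sg_endpoint b E G H pg ph wg wh s Hw Hsub EG Hs Hs1 Eb Hb Ng Nh Tg Th).
  - assert (Hs0 : s <> 0) by (intro h; rewrite EG, h, cross_pscale_l in Ng; lra).
    destruct (dot_self_pos_of_cross _ _ Nh) as [DH _].
    assert (GH : psi G <> psi H).
    { intro e. rewrite e in EG. destruct (psub (psi H) (psi E)) as [x y].
      unfold pscale, dot in *; simpl in *. injection EG as e1 e2.
      assert (x = 0) by (apply (Rmult_eq_reg_r (1 - s)); lra).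
      assert (y = 0) by (apply (Rmult_eq_reg_r (1 - s)); lra). subst. lra. }
    exact (theta_pair_sg_middle b k E G H pg ph s Hk HE Gb Hb GH EG ltac:(lra)).
Qed.

End TGraph.

Lemma phi_ref_white_sum psi (TG : is_TGraph psi) (w : white) :
  phi_ref psi w 0 + phi_ref psi w 1 + phi_ref psi w 2 = 1.
Proof.
  destruct w as [i j].
  assert (ND := tgraph_white_nondeg psi TG (i, j)). simpl in ND.
  set (A := (i, j)) in *. set (B := ((i + 1)%Z, j)) in *. set (C := (i, (j + 1)%Z)) in *.
  set (b0 := (i, j) : black). set (b1 := (i, (j - 1)%Z) : black). set (b2 := ((i - 1)%Z, j) : black).
  assert (e00 : bface b0 0 = B) by reflexivity.
  assert (e01 : bface b0 1 = C) by reflexivity.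
  assert (e11 : bface b1 1 = A) by (unfold b1, A; simpl; f_equal; lia).
  assert (e12 : bface b1 2 = B) by (unfold b1, B; simpl; f_equal; lia).
  assert (e20 : bface b2 0 = A) by (unfold b2, A; simpl; f_equal; lia).
  assert (e21 : bface b2 2 = C) by (unfold b2, C; simpl; f_equal; lia).
  assert (sgA1 : sg psi b1 (psi A)) by (rewrite <- e11; apply sg_bface; lia).
  assert (sgB1 : sg psi b1 (psi B)) by (rewrite <- e12; apply sg_bface; lia).
  assert (sgA2 : sg psi b2 (psi A)) by (rewrite <- e20; apply sg_bface; lia).
  assert (sgC2 : sg psi b2 (psi C)) by (rewrite <- e21; apply sg_bface; lia).
  assert (sgB0 : sg psi b0 (psi B)) by (rewrite <- e00; apply sg_bface; lia).
  assert (sgC0 : sg psi b0 (psi C)) by (rewrite <- e01; apply sg_bface; lia).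
  assert (n12 : b1 <> b2) by (intro h; injection h; lia).
  assert (n01 : b0 <> b1) by (intro h; injection h; lia).
  assert (n20 : b2 <> b0) by (intro h; injection h; lia).
  assert (VA := theta_pair_tri_vertex psi TG (i, j) A B C b1 b2 n12 ND sgA1 sgB1 sgA2 sgC2
     ltac:(rewrite e12; auto) ltac:(rewrite e21; auto) ltac:(intros z hz; exact hz)).
  assert (VB := theta_pair_tri_vertex psi TG (i, j) B C A b0 b1 n01
     ltac:(rewrite cross_triangle_rot; auto) sgB0 sgC0 sgB1 sgA1
     ltac:(rewrite e01; auto) ltac:(rewrite e11; auto)
     ltac:(intros z hz; apply oconv3_swap12, oconv3_swap23, hz)).
  assert (VC := theta_pair_tri_vertex psi TG (i, j) C A B b2 b0 n20
     ltac:(rewrite (cross_triangle_rot (psi B)), cross_triangle_rot; auto) sgC2 sgA2 sgC0 sgB0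
     ltac:(rewrite e20; auto) ltac:(rewrite e00; auto)
     ltac:(intros z hz; apply oconv3_swap23, oconv3_swap12, hz)).
  assert (TS := triangle_angle_sum (psi A) (psi B) (psi C) ND).
  rewrite (uangle_sym (psub (psi C) (psi B))) in VB.
  unfold phi_ref. simpl. subst A B C b0 b1 b2.
  assert (PI > 0) by apply PI_RGT_0.
  field_simplify_eq; lra.
Qed.

Lemma phi_ref_black_sum psi (TG : is_TGraph psi) (b : black) :
  phi_ref_bw psi b 0 + phi_ref_bw psi b 1 + phi_ref_bw psi b 2 = -1.
Proof.
  destruct b as [i j].
  unfold phi_ref_bw, phi_ref, bnbW, bnbK. cbn [wnb efst esnd ethird].
  replace (j + 1 - 1)%Z with j by lia. replace (i + 1 - 1)%Z with i by lia.
  assert (ND0 := tgraph_white_nondeg psi TG (i, j)).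
  assert (ND1 := tgraph_white_nondeg psi TG (i, (j + 1)%Z)).
  assert (ND2 := tgraph_white_nondeg psi TG ((i + 1)%Z, j)).
  assert (Col := tgraph_black_collinear psi TG (i, j)).
  simpl in ND0, ND1, ND2, Col.
  set (F0 := ((i + 1)%Z, j)) in *. set (F1 := (i, (j + 1)%Z)) in *.
  set (F2 := ((i + 1)%Z, (j + 1)%Z)) in *.
  set (T0 := (i, j)) in *. set (T1 := (i, (j + 1 + 1)%Z)) in *. set (T2 := ((i + 1 + 1)%Z, j)) in *.
  assert (sg0 : sg psi T0 (psi F0)) by (apply (sg_bface psi T0 0); lia).
  assert (sg1 : sg psi T0 (psi F1)) by (apply (sg_bface psi T0 1); lia).
  assert (sg2 : sg psi T0 (psi F2)) by (apply (sg_bface psi T0 2); lia).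
  assert (w01 : (T0 : white) <> F1) by (intro h; injection h; lia).
  assert (w02 : (T0 : white) <> F0) by (intro h; injection h; lia).
  assert (w12 : (F1 : white) <> F0) by (intro h; injection h; lia).
  destruct (nondeg_tri_perm _ _ _ ND0) as [_ [_ [N0c [_ N0e]]]].
  destruct (nondeg_tri_perm _ _ _ ND1) as [_ [N1b _]].
  destruct (nondeg_tri_perm _ _ _ ND2) as [N2a [_ [_ [N2d _]]]].
  destruct (collinear_param (psi F0) (psi F1) (psi F2) Col) as [l [l0 [l1 EL]]].
  { intro e. apply N0c. rewrite e. destruct (psi F0); unfold cross, psub; simpl; ring. }
  { intro e. apply ND1. rewrite e. destruct (psi F1); unfold cross, psub; simpl; ring. }
  { destruct (dot_self_pos_of_cross _ _ N2a); auto. }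
  destruct (collinear_ratios _ _ _ _ EL l1) as [R1 R2].
  assert (V0 : theta psi T0 F0 F1 T0 + theta psi T0 F0 F2 T2 = if Rlt_dec 0 l then PI else 0)
    by (apply (theta_pair_sg psi TG T0 0 F0 F1 F2 T0 T2 T0 F0 l w02); auto; try lia;
        intros z hz; tri_perm hz).
  assert (V1 : theta psi T0 F1 F0 T0 + theta psi T0 F1 F2 T1 =
               if Rlt_dec 0 (- l / (1 - l)) then PI else 0).
  { apply (theta_pair_sg psi TG T0 1 F1 F0 F2 T0 T1 T0 F1 (- l / (1 - l)) w01); auto; try lia;
      try (intros z hz; tri_perm hz).
    intro h. apply (Rmult_eq_compat_r (1 - l)) in h.
    unfold Rdiv in h. rewrite Rmult_assoc, Rinv_l in h; lra. }
  assert (V2 : theta psi T0 F2 F1 T1 + theta psi T0 F2 F0 T2 = if Rlt_dec 0 (1 - l) then PI else 0)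
    by (apply (theta_pair_sg psi TG T0 2 F2 F1 F0 T1 T2 F1 F0 (1 - l) w12); auto; try lia;
        try lra; intros z hz; tri_perm hz).
  assert (Tot := collinear_two_endpoints PI l l0 l1).
  rewrite <- V0, <- V1, <- V2 in Tot.
  assert (PI > 0) by apply PI_RGT_0.
  field_simplify_eq; lra.
Qed.

Theorem mainTheorem8 (psi : face -> pt) :
  is_TGraph psi ->
  (forall w : white, phi_ref psi w 0 + phi_ref psi w 1 + phi_ref psi w 2 = 1) /\
  (forall b : black, phi_ref_bw psi b 0 + phi_ref_bw psi b 1 + phi_ref_bw psi b 2 = -1).
Proof.
  intros TG. split; [apply phi_ref_white_sum | apply phi_ref_black_sum]; exact TG.
Qed.
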